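(* Let $\mathbf F\in\mathcal F_d$. The map $S_{\mathbf F}$ restricted to $\mathcal C^{OS}(\mathbf F)$ is injective; hence it is a bijection from $\mathcal C^{OS}(\mathbf F)$ onto $S_{\mathbf F}(\mathcal C^{OS}(\mathbf F))$.
   Context: $\mathcal F_d$: $d$-tuples $\mathbf F=(\mathbf F_1,\dots,\mathbf F_d)$ of continuous cdf's on $\mathbb R$ with $\mathbf F_{i-1}\ge\mathbf F_i$ for $2\le i\le d$. $\mathcal L^{OS}_d(\mathbf F)$: cdf's of random vectors $X$ with $X_1\le\dots\le X_d$ a.s. and $X_i$ with cdf $\mathbf F_i$. A copula is a cdf on $\mathbb R^d$ with uniform-on-$[0,1]$ marginals; for a cdf $F$ with continuous marginals $F_i$, its copula is $C_F(y)=F(F_1^{-1}(y_1),\dots,F_d^{-1}(y_d))$ with $J^{-1}(t)=\inf\{s:J(s)\ge t\}$. $\mathcal C^{OS}(\mathbf F)=\{C_F:F\in\mathcal L^{OS}_d(\mathbf F)\}$. For a copula $C$, $S_{\mathbf F}(C)$ is the copula of the exchangeable vector $X_\Pi=(X_{\Pi(1)},\dots,X_{\Pi(d)})$, where $X$ has one-dimensional marginal cdf's $\mathbf F$ and copula $C$, and $\Pi$ is independent of $X$ and uniform on the permutations of $\{1,\dots,d\}$ (its marginals are all $G=\frac1d\sum\mathbf F_i$, which is continuous, so this copula is unique). *)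

From HB Require Import structures.
From mathcomp Require Import all_boot all_order all_algebra all_fingroup.
From mathcomp Require Import all_classical all_reals all_analysis.
Set Implicit Arguments. Unset Strict Implicit. Unset Printing Implicit Defensive.
Import Order.TTheory GRing.Theory Num.Theory.
Import numFieldNormedType.Exports.
Local Open Scope classical_set_scope.
Local Open Scope ring_scope.

Section Defs.
Variable R : realType.

Definition continuous_cdf (J : R -> R) : Prop :=
  [/\ {homo J : x y / x <= y},
      continuous J,
      J x @[x --> -oo] --> (0 : R) &
      J x @[x --> +oo] --> (1 : R)].

Definition calF (d : nat) (F : 'I_d -> R -> R) : Prop :=
  (forall i, continuous_cdf (F i)) /\
  (forall i j : 'I_d, nat_of_ord j = (nat_of_ord i).+1 -> forall x, F j x <= F i x).

(* Generalized inverse J^{-1}(t) = inf {s : J s >= t}, in the extended reals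
   (so that it is -oo when the set is unbounded below, +oo when it is empty). *)
Definition ginv (J : R -> R) (t : R) : \bar R :=
  ereal_inf (EFin @` [set s | t <= J s]).

Context {dT : measure_display} {T : measurableType dT} (P : probability T R).

Definition rv_cdf (Y : T -> R) (s : R) : R := fine (P (Y @^-1` `]-oo, s])).

Definition rvec_cdfE (d : nat) (X : 'I_d -> T -> R) (x : 'I_d -> \bar R) : R :=
  fine (P [set t | forall i, ((X i t)%:E <= x i)%E]).

Definition copula_of (d : nat) (X : 'I_d -> T -> R) : ('I_d -> R) -> R :=
  fun y => rvec_cdfE X (fun i => ginv (rv_cdf (X i)) (y i)).

Definition is_rvec (d : nat) (X : 'I_d -> T -> R) : Prop :=
  forall i, measurable_fun setT (X i).

Definition sigmaX (d : nat) (X : 'I_d -> T -> R) : set (set T) :=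
  <<s [set A | exists i B, measurable B /\ A = X i @^-1` B] >>.

Definition uniform_perm (d : nat) (Pi : T -> {perm 'I_d}) : Prop :=
  forall s : {perm 'I_d}, measurable (Pi @^-1` [set s]) /\
    P (Pi @^-1` [set s]) = ((d`!)%:R^-1 : R)%:E.

Definition indep_vec_perm (d : nat) (X : 'I_d -> T -> R) (Pi : T -> {perm 'I_d}) :=
  forall A (s : {perm 'I_d}), sigmaX X A ->
    P (A `&` Pi @^-1` [set s]) = (P A * P (Pi @^-1` [set s]))%E.

End Defs.

Definition COS (R : realType) (d : nat) (F : 'I_d -> R -> R)
    (C : ('I_d -> R) -> R) : Prop :=
  exists (dT : measure_display) (T : measurableType dT) (P : probability T R)
         (X : 'I_d -> T -> R),
    [/\ is_rvec X,
        {ae P, forall t, forall i j : 'I_d,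
            nat_of_ord j = (nat_of_ord i).+1 -> X i t <= X j t},
        (forall i, rv_cdf P (X i) = F i) &
        C = copula_of P X].

(* SF F C D : D = S_F(C), i.e. D is the copula of X_Pi = (X_{Pi(1)},...,X_{Pi(d)})
   where X has marginal cdfs F and copula C, and Pi is independent of X and
   uniform on the permutations. *)
Definition SF (R : realType) (d : nat) (F : 'I_d -> R -> R)
    (C D : ('I_d -> R) -> R) : Prop :=
  exists (dT : measure_display) (T : measurableType dT) (P : probability T R)
         (X : 'I_d -> T -> R) (Pi : T -> {perm 'I_d}),
    [/\ is_rvec X,
        (forall i, rv_cdf P (X i) = F i),
        C = copula_of P X,
        uniform_perm P Pi /\ indep_vec_perm P X Pi &
        D = copula_of P (fun i t => X (Pi t i) t)].

From HB Require Import structures.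
From mathcomp Require Import all_boot all_order all_algebra all_fingroup.
From mathcomp Require Import all_classical all_reals all_analysis.
Set Implicit Arguments. Unset Strict Implicit. Unset Printing Implicit Defensive.
Import Order.TTheory GRing.Theory Num.Theory.
Import numFieldNormedType.Exports.
Local Open Scope classical_set_scope.
Local Open Scope ring_scope.

(* Let [os_orthant a] be the set of points whose order statistics are bounded
   coordinatewise by [a].  On vectors with nondecreasing coordinates it
   coincides with the orthant [orthant a], and it is invariant under
   permutations of the coordinates.  Hence, if [X] has marginals [F], copula
   [C] and a.s. ordered coordinates, and [X'] has the same copula and
   marginals, then P(X <= a) = P(X'_Pi in os_orthant a).  The law of [X'_Pi]
   is fixed by its copula S_F(C) and by its marginals, which are averages of
   the [F i]; so S_F(C) determines the joint cdf of [X] and hence [C]. *)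

Lemma preimage_measurable d (T : measurableType d) (R : realType)
    (f : T -> R) (B : set R) :
  measurable_fun setT f -> measurable B -> measurable (f @^-1` B).
Proof. by move=> mf mB; rewrite -[_ @^-1` _]setTI; exact: mf. Qed.

Lemma measurable_EFin_le d (T : measurableType d) (R : realType)
    (f : T -> R) (b : \bar R) :
  measurable_fun setT f -> measurable [set t | ((f t)%:E <= b)%E].
Proof.
move=> mf; case: b => [r| |].
- have -> : [set t | ((f t)%:E <= r%:E)%E] = f @^-1` `]-oo, r].
    by apply/seteqP; split=> t /=; rewrite in_itv /= lee_fin.
  exact: preimage_measurable.
- have -> : [set t | ((f t)%:E <= +oo)%E] = setT.
    by apply/seteqP; split=> t //= _; rewrite leey.
  exact: measurableT.
- have -> : [set t | ((f t)%:E <= -oo)%E] = set0.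
    by apply/seteqP; split=> t //=; rewrite leeNy_eq.
  exact: measurable0.
Qed.

Lemma measure_ae_eq d (T : measurableType d) (R : realType)
    (mu : {measure set T -> \bar R}) (A B : set T) :
  measurable A -> measurable B -> {ae mu, forall t, A t <-> B t} -> mu A = mu B.
Proof.
move=> mA mB [N [mN N0 AB]].
have null_on_N (E : set T) : measurable E -> mu (E `&` N) = 0%E.
  by move=> mE; apply: (subset_measure0 (measurableI _ _ mE mN) mN) => //; exact: subIsetr.
rewrite (measureDI mu mA mN) (measureDI mu mB mN); congr (_ + _)%E; last first.
  by transitivity (0 : \bar R); [|symmetry]; exact: null_on_N.
congr (mu _).
apply/seteqP; split=> t [Et Nt]; split=> //.
- by apply: contrapT => Bt; apply: Nt; apply: AB => /= -[/(_ Et)].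
- by apply: contrapT => At; apply: Nt; apply: AB => /= -[_ /(_ Et)].
Qed.

Lemma ereal_lt_seq (R : realType) (c : \bar R) : (c < +oo)%E ->
  exists u : R^nat, (forall n, c < (u n)%:E)%E /\
    forall x : R, (c < x%:E)%E -> exists n, u n < x.
Proof.
case: c => [c| |] // _.
- exists (fun n => c + n.+1%:R^-1); split => [n|x].
    by rewrite lte_fin ltrDl invr_gt0.
  by rewrite lte_fin => /ltr_add_invr.
- exists (fun n => - n%:R); split => [n|x _]; first exact: ltNyr.
  by exists (Num.trunc (- x)).+1; rewrite ltrNl; exact: truncnS_gt.
Qed.

Section orthant.
Context {R : realType} {n : nat}.

Definition orthant (a : 'I_n -> \bar R) : set ('I_n -> R) :=
  [set x | forall i, ((x i)%:E <= a i)%E].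

Definition orthants : set (set ('I_n -> R)) := range orthant.

Lemma orthantT : orthant (fun=> +oo%E) = setT.
Proof. by apply/seteqP; split=> x // _ i; rewrite leey. Qed.

Lemma orthants_setI_closed : setI_closed orthants.
Proof.
move=> _ _ [a _ <-] [b _ <-]; exists (fun i => Order.min (a i) (b i)) => //.
apply/seteqP; split=> x /=.
- by move=> xab; split=> i; have := xab i; rewrite le_min => /andP[].
- by move=> [xa xb] i; rewrite le_min xa xb.
Qed.

Definition rvec T (X : 'I_n -> T -> R) : T -> g_sigma_algebraType orthants :=
  fun t i => X i t.

Context {d} {T : measurableType d}.
Implicit Types (X : 'I_n -> T -> R) (P : probability T R).

Lemma measurable_rvec_orthant X a : is_rvec X -> measurable (rvec X @^-1` orthant a).
Proof.
move=> mX; have -> : rvec X @^-1` orthant a =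
    \bigcap_(i in [set: 'I_n]) [set t | ((X i t)%:E <= a i)%E].
  by apply/seteqP; split=> t /= Xt i => [_|]; apply: Xt.
apply: fin_bigcap_measurable; first exact: finite_finset.
by move=> i _; exact: measurable_EFin_le.
Qed.

Lemma measurable_rvec X : is_rvec X -> measurable_fun setT (rvec X).
Proof.
move=> mX; apply: (@measurability _ _ _ _ setT (rvec X) orthants erefl).
move=> _ [_ [a _ <-] <-].
by rewrite setTI; exact: measurable_rvec_orthant.
Qed.

Lemma measurable_rvec_preimage X A :
  is_rvec X -> <<s orthants >> A -> measurable (rvec X @^-1` A).
Proof. by move=> /measurable_rvec mX mA; rewrite -[_ @^-1` _]setTI; exact: mX. Qed.

End orthant.

Lemma eq_rvec_law (R : realType) (n : nat)
    d (T : measurableType d) (P : probability T R) (X : 'I_n -> T -> R)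
    d' (T' : measurableType d') (P' : probability T' R) (X' : 'I_n -> T' -> R) :
  is_rvec X -> is_rvec X' -> rvec_cdfE P X =1 rvec_cdfE P' X' ->
  forall A, <<s orthants >> A -> P (rvec X @^-1` A) = P' (rvec X' @^-1` A).
Proof.
move=> mX mX' eXX' A mA.
have mpX := measurable_rvec mX; have mpX' := measurable_rvec mX'.
have law_unique := @measure_unique _ _ (g_sigma_algebraType orthants) orthants
  (fun=> setT) erefl orthants_setI_closed _ _
  (pushforward P (rvec X)) (pushforward P' (rvec X')).
apply: (law_unique _ _ mpX mpX' _ _ A mA).
- by move=> _; exists (fun=> +oo%E) => //; exact: orthantT.
- exact: bigcup_const.
- move=> _ [a _ <-]; have := congr1 EFin (eXX' a).
  by rewrite /rvec_cdfE !fineK ?fin_num_measure //; exact: measurable_rvec_orthant.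
- by move=> _; apply: le_lt_trans (probability_le1 P measurableT) _; rewrite ltry.
Qed.

(* Levels above 1 and at 0 make [ginv] of a cdf return exactly [+oo] and [-oo]. *)
Definition cdf_level (R : realType) (H : R -> R) (b : \bar R) : R :=
  match b with r%:E => H r | +oo%E => 2 | -oo%E => 0 end.

Section quantile.
Context {d} {T : measurableType d} {R : realType} (P : probability T R).
Variable Y : T -> R.
Hypothesis mY : measurable_fun setT Y.
Local Notation H := (rv_cdf P Y).

Lemma rv_cdf_nondecreasing : {homo H : r s / r <= s}.
Proof.
move=> r s rs; rewrite /rv_cdf fine_le ?fin_num_measure //;
  try exact: preimage_measurable.
apply: le_measure; rewrite ?inE; try exact: preimage_measurable.
by apply: preimage_subset => x /=; rewrite !in_itv /= => /le_trans; apply.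
Qed.

Lemma rv_cdf_le1 s : H s <= 1.
Proof.
have mYs : measurable (Y @^-1` `]-oo, s]) by exact: preimage_measurable.
by rewrite /rv_cdf -lee_fin fineK ?fin_num_measure // probability_le1.
Qed.

Lemma ae_le_of_rv_cdf_le r s : H r <= H s -> {ae P, forall t, Y t <= r -> Y t <= s}.
Proof.
move=> Hrs; have [rs|sr] := leP r s; first by apply: aeW => t /le_trans; apply.
have mA : measurable (Y @^-1` `]-oo, r]) by exact: preimage_measurable.
have mB : measurable (Y @^-1` `]-oo, s]) by exact: preimage_measurable.
have BA : Y @^-1` `]-oo, s] `<=` Y @^-1` `]-oo, r].
  by move=> t /=; rewrite !in_itv /= => /le_trans; apply; exact: ltW.
have PAB : P (Y @^-1` `]-oo, r]) = P (Y @^-1` `]-oo, s]).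
  rewrite -(fineK (fin_num_measure P _ mA)) -(fineK (fin_num_measure P _ mB)).
  by congr (_%:E); apply/le_anti; rewrite Hrs rv_cdf_nondecreasing // ltW.
exists (Y @^-1` `]-oo, r] `\` Y @^-1` `]-oo, s]); split.
- exact: measurableD.
- rewrite measureD ?(le_lt_trans (probability_le1 _ mA)) ?ltry // setIidr //.
  transitivity (P (Y @^-1` `]-oo, s]) - P (Y @^-1` `]-oo, s]))%E.
    by congr (_ - _)%E; exact: PAB.
  by rewrite subee ?fin_num_measure.
- by move=> t /= /not_implyP[Ytr Yts]; rewrite !in_itv.
Qed.

Lemma ginv_rv_cdf_le r : (ginv H (H r) <= r%:E)%E.
Proof. by apply: ereal_inf_lbound; exists r => //; exact: lexx. Qed.

Lemma ae_le_ginv_rv_cdf r :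
  {ae P, forall t, Y t <= r -> ((Y t)%:E <= ginv H (H r))%E}.
Proof.
set c := ginv H (H r).
have [u [cu uc]] := ereal_lt_seq (le_lt_trans (ginv_rv_cdf_le r) (ltry r)).
have Hru n : H r <= H (u n).
  have [_ [s Hs <-] su] := ereal_inf_lt (cu n).
  by apply: le_trans Hs (rv_cdf_nondecreasing _); rewrite -lee_fin ltW.
have := ae_foralln (fun n => ae_le_of_rv_cdf_le (Hru n)).
apply: filterS => t Yu Ytr; rewrite leNgt; apply/negP => /uc [n].
by apply/negP; rewrite -leNgt; exact: Yu.
Qed.

Lemma ginv_rv_cdf0 : ginv H 0 = -oo%E.
Proof.
have lb x : (ginv H 0 <= x%:E)%E by apply: ereal_inf_lbound; exists x => //; exact: fine_ge0.
case E: (ginv H 0) => [c| |] //.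
- by have := lb (c - 1); rewrite E lee_fin lerDl oppr_ge0 ler10.
- by have := lb 0; rewrite E.
Qed.

Lemma ginv_rv_cdf_gt1 t : 1 < t -> ginv H t = +oo%E.
Proof.
move=> t1; rewrite /ginv (_ : [set s | t <= H s] = set0) ?image_set0 ?ereal_inf0 //.
apply/seteqP; split=> s //= tH.
by have := lt_le_trans t1 (le_trans tH (rv_cdf_le1 s)); rewrite ltxx.
Qed.

Lemma ae_le_ginv_cdf_level b :
  {ae P, forall t, ((Y t)%:E <= b)%E <-> ((Y t)%:E <= ginv H (cdf_level H b))%E}.
Proof.
case: b => [r| |] /=.
- apply: filterS (ae_le_ginv_rv_cdf r) => t Yc; split; first by rewrite lee_fin; exact: Yc.
  by move=> /le_trans; apply; exact: ginv_rv_cdf_le.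
- by apply: aeW => t; rewrite ginv_rv_cdf_gt1 ?ltr1n // !leey.
- by apply: aeW => t; rewrite ginv_rv_cdf0.
Qed.

End quantile.

(* Sklar's representation of the joint cdf; it holds for arbitrary marginals,
   since {Y <= r} and {Y <= ginv F (F r)} differ by a null set. *)
Lemma rvec_cdfE_copula d (T : measurableType d) (R : realType) (P : probability T R)
    n (X : 'I_n -> T -> R) (b : 'I_n -> \bar R) : is_rvec X ->
  rvec_cdfE P X b = copula_of P X (fun i => cdf_level (rv_cdf P (X i)) (b i)).
Proof.
move=> mX; congr fine; apply: measure_ae_eq; try exact: measurable_rvec_orthant.
apply: filterS (filter_forall _ (fun i => ae_le_ginv_cdf_level P (mX i) (b i))).
by move=> t Xt; split=> Xtb i; apply/Xt/Xtb.
Qed.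

Lemma eq_rvec_cdfE d (T : measurableType d) (R : realType) (P : probability T R)
    d' (T' : measurableType d') (P' : probability T' R)
    n (X : 'I_n -> T -> R) (X' : 'I_n -> T' -> R) : is_rvec X -> is_rvec X' ->
  (forall i, rv_cdf P (X i) = rv_cdf P' (X' i)) -> copula_of P X = copula_of P' X' ->
  rvec_cdfE P X =1 rvec_cdfE P' X'.
Proof.
move=> mX mX' eF eC b; rewrite !rvec_cdfE_copula // eC.
by congr (copula_of _ _ _); apply/funext => i; rewrite eF.
Qed.

Section order_statistics.
Context {R : realType} {n : nat}.

(* With [k] counted from 0: at least [k + 1] coordinates of [x] are at most
   [a k], i.e. the (k+1)-th smallest coordinate of [x] is at most [a k]. *)
Definition os_orthant (a : 'I_n -> \bar R) : set ('I_n -> R) :=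
  [set x | forall k : 'I_n, (k < #|[set j | ((x j)%:E <= a k)%E]%SET|)%N].

Definition sorted_vec (x : 'I_n -> R) : Prop :=
  forall i j : 'I_n, nat_of_ord j = (nat_of_ord i).+1 -> x i <= x j.

Lemma sorted_vec_le x : sorted_vec x -> forall i j : 'I_n, (i <= j)%N -> x i <= x j.
Proof.
move=> x_sorted.
suff x_le m (i j : 'I_n) : nat_of_ord j = (i + m)%N -> x i <= x j.
  by move=> i j ij; apply: (x_le (j - i)%N); rewrite subnKC.
elim: m i j => [|m IHm] i j ji.
  by have -> : j = i by apply: val_inj; rewrite /= ji addn0.
have im : (i + m < n)%N by apply: leq_trans (ltn_ord j); rewrite ji addnS.
apply: (le_trans (IHm i (Ordinal im) erefl)); apply: x_sorted => /=.
by rewrite ji addnS.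
Qed.

Lemma card_le_of_lt (J : {set 'I_n}) k :
  (forall j, j \in J -> (j < k)%N) -> (#|J| <= k)%N.
Proof.
move=> Jk; rewrite cardE -(size_map (@nat_of_ord n)) -[k](size_iota 0).
apply: uniq_leq_size; first by rewrite map_inj_uniq ?enum_uniq //; exact: val_inj.
move=> m /mapP[j]; rewrite mem_enum => /Jk jk ->.
by rewrite mem_iota add0n jk.
Qed.

Lemma card_gt_of_le (J : {set 'I_n}) k :
  (forall j : 'I_n, (j <= k)%N -> j \in J) -> (k < n)%N -> (k < #|J|)%N.
Proof.
move=> kJ kn; rewrite cardE -(size_map (@nat_of_ord n)) -[k.+1](size_iota 0).
apply: uniq_leq_size; first exact: iota_uniq.
move=> m; rewrite mem_iota add0n => mk.
have mn : (m < n)%N by apply: leq_trans mk kn.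
by apply/mapP; exists (Ordinal mn) => //; rewrite mem_enum; apply: kJ.
Qed.

Lemma os_orthantE a x : sorted_vec x -> os_orthant a x <-> orthant a x.
Proof.
move=> x_sorted; have x_le := sorted_vec_le x_sorted.
split=> xa k.
- apply/negPn/negP => xka; have := xa k; apply/negP; rewrite -leqNgt.
  apply: card_le_of_lt => j; rewrite inE => xja; rewrite ltnNge; apply/negP => kj.
  by move/negP: xka; apply; apply: le_trans xja; rewrite lee_fin x_le.
- apply: card_gt_of_le (ltn_ord k) => j jk; rewrite inE.
  by apply: le_trans (xa k); rewrite lee_fin x_le.
Qed.

Lemma os_orthant_perm a x (s : {perm 'I_n}) :
  os_orthant a (fun i => x (s i)) <-> os_orthant a x.
Proof.
have card_perm k : #|[set j | ((x (s j))%:E <= a k)%E]%SET| =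
                   #|[set j | ((x j)%:E <= a k)%E]%SET|.
  rewrite -(@card_preimset _ s [set j | ((x j)%:E <= a k)%E]%SET (@perm_inj _ s)).
  by apply: eq_card => j; rewrite !inE.
by split=> xa k; have := xa k; rewrite /= card_perm.
Qed.

Lemma os_orthant_sigma a : <<s orthants >> (os_orthant a).
Proof.
pose Rn := g_sigma_algebraType (@orthants R n).
have -> : os_orthant a = \bigcap_(k in [set: 'I_n])
    \bigcup_(J in [set J : {set 'I_n} | (k < #|J|)%N])
      orthant (fun j => if j \in J then a k else +oo%E).
  apply/seteqP; split=> x /= xa.
  - move=> k _; exists [set j | ((x j)%:E <= a k)%E]%SET => [|j]; first exact: xa.
    by case: ifPn => [|_]; [rewrite inE | rewrite leey].
  - move=> k; have [J /= kJ xJ] := xa k I.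
    apply: (leq_trans kJ); apply: subset_leq_card; apply/fintype.subsetP => j jJ.
    by rewrite inE; have := xJ j; rewrite jJ.
apply: (@fin_bigcap_measurable _ Rn); first exact: finite_finset.
move=> k _; apply: (@fin_bigcup_measurable _ Rn); first exact: finite_finset.
by move=> J _; apply: sub_sigma_algebra; eexists.
Qed.

End order_statistics.

Definition permuted_rvec (T : Type) (R : Type) n (X : 'I_n -> T -> R)
    (Pi : T -> {perm 'I_n}) : 'I_n -> T -> R :=
  fun i t => X (Pi t i) t.

Lemma preimage_os_orthant_permuted (R : realType) n T (X : 'I_n -> T -> R) Pi a :
  rvec (permuted_rvec X Pi) @^-1` os_orthant a = rvec X @^-1` os_orthant a.
Proof.
by apply/seteqP; split=> t /(os_orthant_perm a (fun j => X j t) (Pi t)).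
Qed.

Section random_permutation.
Context {d} {T : measurableType d} {R : realType} (P : probability T R) {n : nat}.
Variables (X : 'I_n -> T -> R) (Pi : T -> {perm 'I_n}).
Hypotheses (mX : is_rvec X) (Pi_unif : uniform_perm P Pi).

Lemma permuted_rvec_preimage i (B : set R) : permuted_rvec X Pi i @^-1` B =
  \bigcup_(s in [set: {perm 'I_n}]) (X (s i) @^-1` B `&` Pi @^-1` [set s]).
Proof.
rewrite /permuted_rvec; apply/seteqP; split=> t /= => [Bt|[s _ [Bt ->]]] //.
by exists (Pi t).
Qed.

Lemma measurable_perm_fiber (s : {perm 'I_n}) : measurable (Pi @^-1` [set s]).
Proof. by have [] := Pi_unif s. Qed.

Lemma is_rvec_permuted : is_rvec (permuted_rvec X Pi).
Proof.
move=> i _ B mB; rewrite setTI permuted_rvec_preimage.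
apply: fin_bigcup_measurable; first exact: finite_finset.
by move=> s _; apply: measurableI; [exact: preimage_measurable|exact: measurable_perm_fiber].
Qed.

Lemma measure_permuted_le (F : 'I_n -> R -> R) : indep_vec_perm P X Pi ->
  (forall i, rv_cdf P (X i) = F i) -> forall i x,
  P (permuted_rvec X Pi i @^-1` `]-oo, x]) =
  (\sum_(s \in [set: {perm 'I_n}]) ((F (s i) x)%:E * ((n`!)%:R^-1)%:E))%E.
Proof.
move=> X_Pi_indep XF i x; rewrite permuted_rvec_preimage measure_fin_bigcup //.
- apply: eq_fsbigr => s _.
  have mXs : measurable (X (s i) @^-1` `]-oo, x]) by exact: preimage_measurable.
  transitivity (P (X (s i) @^-1` `]-oo, x]) * P (Pi @^-1` [set s]))%E.
    by apply: X_Pi_indep; apply: sub_sigma_algebra; exists (s i), `]-oo, x]%classic.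
  have [_ ->] := Pi_unif s; congr (_ * _)%E.
  by rewrite -XF /rv_cdf fineK // fin_num_measure.
- exact: finite_finset.
- by move=> s s' _ _ [t [[_ <-] [_ <-]]].
- by move=> s _; apply: measurableI; [exact: preimage_measurable|exact: measurable_perm_fiber].
Qed.

End random_permutation.

Lemma ae_sorted_orthant_prob d (T : measurableType d) (R : realType)
    (P : probability T R) n (X : 'I_n -> T -> R) a : is_rvec X ->
  {ae P, forall t, sorted_vec (fun i => X i t)} ->
  P (rvec X @^-1` orthant a) = P (rvec X @^-1` os_orthant a).
Proof.
move=> mX X_sorted; apply: measure_ae_eq.
- exact: measurable_rvec_orthant.
- by apply: measurable_rvec_preimage => //; exact: os_orthant_sigma.
- by apply: filterS X_sorted => t /os_orthantE Xa; split=> /Xa.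
Qed.

Lemma orthant_prob_sorted_permuted d (T : measurableType d) (R : realType)
    (P : probability T R) n (X : 'I_n -> T -> R)
    d' (T' : measurableType d') (P' : probability T' R) (X' : 'I_n -> T' -> R)
    (Pi : T' -> {perm 'I_n}) :
  is_rvec X -> {ae P, forall t, sorted_vec (fun i => X i t)} -> is_rvec X' ->
  (forall i, rv_cdf P (X i) = rv_cdf P' (X' i)) -> copula_of P X = copula_of P' X' ->
  forall a, P (rvec X @^-1` orthant a) =
            P' (rvec (permuted_rvec X' Pi) @^-1` os_orthant a).
Proof.
move=> mX X_sorted mX' eF eC a.
rewrite ae_sorted_orthant_prob // preimage_os_orthant_permuted.
exact: eq_rvec_law (eq_rvec_cdfE mX mX' eF eC) _ (os_orthant_sigma a).
Qed.

Lemma copula_ofE d (T : measurableType d) (R : realType) (P : probability T R)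
    n (X : 'I_n -> T -> R) (F : 'I_n -> R -> R) y :
  (forall i, rv_cdf P (X i) = F i) ->
  copula_of P X y = fine (P (rvec X @^-1` orthant (fun i => ginv (F i) (y i)))).
Proof.
move=> XF; rewrite /copula_of /rvec_cdfE; congr (fine (P _)).
by apply/seteqP; split=> t /= Xt i; have := Xt i; rewrite XF.
Qed.

Theorem mainTheorem7 (R : realType) (d : nat) (F : 'I_d -> R -> R) :
  calF F ->
  forall C1 C2 D : ('I_d -> R) -> R,
    COS F C1 -> COS F C2 -> SF F C1 D -> SF F C2 D -> C1 = C2.
Proof.
move=> _ C1 C2 D [dA [TA [PA [XA [mXA sortedA FA ->]]]]]
  [dB [TB [PB [XB [mXB sortedB FB ->]]]]]
  [d1 [T1 [P1 [X1 [Pi1 [mX1 F1 C1E [unif1 indep1] D1E]]]]]]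
  [d2 [T2 [P2 [X2 [Pi2 [mX2 F2 C2E [unif2 indep2] D2E]]]]]].
apply/funext => y; rewrite (copula_ofE y FA) (copula_ofE y FB); congr fine.
rewrite (orthant_prob_sorted_permuted Pi1 mXA sortedA mX1 _ C1E); last first.
  by move=> i; rewrite FA F1.
rewrite (orthant_prob_sorted_permuted Pi2 mXB sortedB mX2 _ C2E); last first.
  by move=> i; rewrite FB F2.
apply: eq_rvec_law (os_orthant_sigma _);
  [exact: is_rvec_permuted|exact: is_rvec_permuted|].
apply: eq_rvec_cdfE; [exact: is_rvec_permuted|exact: is_rvec_permuted| |].
  move=> i; apply/funext => x.
  by rewrite /rv_cdf (measure_permuted_le mX1 unif1 indep1 F1)
                     (measure_permuted_le mX2 unif2 indep2 F2).
by rewrite -D1E -D2E.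
Qed.
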